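(* Let $n\in\mathbb N$ with $n\ge 10$ and let $T_n$ be a tree on $n$ vertices with $\Delta(T_n)=n-4$. Suppose that for every integer $m\ge n$ and every connected graph $H\in\mathrm{Ex}(m;T_n)$ we have $\Delta(H)\le n-5$. Let $p=k(n-1)+r\ge n-1$ with $k\in\mathbb N$ and $r\in\{0,1,\ldots,n-2\}$. Then $$\mathrm{ex}(p;T_n)=\frac{(n-2)p-r(n-1-r)}2+\max\Big\{0,\Big\lfloor\frac{r(n-4-r)-3(n-1)}2\Big\rfloor\Big\}.$$
   Context: All graphs are finite simple graphs; $\Delta(G)$ is the maximum degree of $G$. For a graph $L$, $\mathrm{ex}(p;L)$ is the maximum number of edges in a graph on $p$ vertices containing no subgraph isomorphic to $L$, and $\mathrm{Ex}(p;L)$ is the set of graphs on $p$ vertices containing no copy of $L$ and having exactly $\mathrm{ex}(p;L)$ edges. $\lfloor x\rfloor$ is the greatest integer not exceeding $x$. *)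

From HB Require Import structures.
From mathcomp Require Import all_boot all_order all_algebra.
Set Implicit Arguments. Unset Strict Implicit. Unset Printing Implicit Defensive.
Import Order.TTheory GRing.Theory Num.Theory.

(* A finite simple graph on p vertices: vertex set 'I_p, edge set E a set of
   2-element subsets of 'I_p. *)
Definition graph (p : nat) := {set {set 'I_p}}.

Definition wf_graph p (E : graph p) : bool := [forall e in E, #|e| == 2].

Definition adj p (E : graph p) : rel 'I_p := fun x y => [set x; y] \in E.

Definition deg p (E : graph p) (v : 'I_p) : nat := #|[set w | adj E v w]|.

Definition maxdeg p (E : graph p) : nat := \max_(v : 'I_p) deg E v.

Definition nedges p (E : graph p) : nat := #|E|.

Definition connected p (E : graph p) : bool :=
  [forall x : 'I_p, forall y : 'I_p, connect (adj E) x y].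

Definition acyclic p (E : graph p) : Prop :=
  ~ exists s : seq 'I_p, [/\ 3 <= size s, uniq s & cycle (adj E) s].

Definition is_tree p (E : graph p) : Prop :=
  wf_graph E /\ connected E /\ acyclic E.

Definition contains p q (G : graph p) (L : graph q) : bool :=
  [exists f : {ffun 'I_q -> 'I_p},
     injectiveb f && [forall e in L, (f @: e) \in G]].

Definition ex p q (L : graph q) : nat :=
  \max_(G : graph p | wf_graph G && ~~ contains G L) nedges G.

Definition in_Ex p q (L : graph q) (G : graph p) : bool :=
  [&& wf_graph G, ~~ contains G L & nedges G == ex p L].

(* Write d = n - 5, so that T has maximum degree d + 1 and n - 1 = d + 4 vertices
   do not suffice to contain T.  Lower bound: disjoint copies of K_(d+4) together
   with either K_r or a circulant graph of maximum degree d on d + 4 + r vertices;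
   neither piece contains T, hence neither does their disjoint union, T being
   connected.  Upper bound, by strong induction on p: an extremal graph on
   p <= d + 4 vertices has at most C(p, 2) edges; a connected one on more vertices
   has maximum degree at most d by hypothesis, hence at most p d / 2 edges; a
   disconnected one splits into two smaller T-free graphs, and the claimed value
   is superadditive in p. *)

From HB Require Import structures.
From mathcomp Require Import all_boot all_order all_algebra.
From mathcomp Require Import zify.
Set Implicit Arguments. Unset Strict Implicit. Unset Printing Implicit Defensive.
Import Order.TTheory GRing.Theory Num.Theory.

(** * Graphs, embeddings and ex *)

Lemma eq_set2 (T : finType) (a b c d : T) :
  [set a; b] = [set c; d] -> (a = c /\ b = d) \/ (a = d /\ b = c).
Proof.
move=> E; have : a \in [set c; d] by rewrite -E set21.
case/set2P => a_eq; subst a.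
- have : d \in [set c; b] by rewrite E set22.
  case/set2P => [d_eq|->]; last by left.
  subst d; have : b \in [set c; c] by rewrite -E set22.
  by rewrite setUid => /set1P ->; left.
- have : c \in [set d; b] by rewrite E set21.
  case/set2P => [c_eq|->]; last by right.
  subst c; have : b \in [set d; d] by rewrite -E set22.
  by rewrite setUid => /set1P ->; right.
Qed.

Lemma card_edge p (G : graph p) : wf_graph G -> forall e, e \in G -> #|e| = 2.
Proof. by move=> /forallP wf e eG; move/implyP: (wf e) => /(_ eG) /eqP. Qed.

Lemma wf_graph_edge_neq0 p (G : graph p) e : wf_graph G -> e \in G -> e != set0.
Proof. by move=> wf eG; apply/eqP => e0; have := card_edge wf eG; rewrite e0 cards0. Qed.

Lemma contains_embedding p q (G : graph p) (L : graph q) :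
  contains G L -> exists f : 'I_q -> 'I_p, injective f /\ forall e, e \in L -> f @: e \in G.
Proof.
case/existsP => f /andP [/injectiveP finj /forallP fE].
by exists f; split => // e eL; apply: (implyP (fE e) eL).
Qed.

Lemma contains_maxdeg p q (G : graph p) (L : graph q) : contains G L -> maxdeg L <= maxdeg G.
Proof.
move=> /contains_embedding [f [finj fE]]; apply/bigmax_leqP => v _.
apply: leq_trans (leq_bigmax (f v)); rewrite /deg -(card_imset _ finj).
apply: subset_leq_card; apply/subsetP => x /imsetP [w]; rewrite inE => hw ->.
by rewrite inE /adj; have := fE _ hw; rewrite imsetU1 imset_set1.
Qed.

Lemma contains_card p q (G : graph p) (L : graph q) : contains G L -> q <= p.
Proof. by move=> /contains_embedding [f [finj _]]; have := leq_card f finj; rewrite !card_ord. Qed.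

Lemma deg_edges p (G : graph p) v : wf_graph G -> deg G v = #|[set e in G | v \in e]|.
Proof.
move=> wf; have -> : [set e in G | v \in e] = (fun w => [set v; w]) @: [set w | adj G v w].
  apply/setP => e; apply/idP/imsetP.
  - rewrite inE => /andP [eG ve]; move/eqP/cards2P: (card_edge wf eG) => [x [y [_ exy]]].
    move: ve eG; rewrite exy !inE => /orP [] /eqP -> xyG.
    + by exists y; rewrite ?inE.
    + by exists x; rewrite ?inE /adj setUC.
  - by case=> w; rewrite inE /adj => hw ->; rewrite inE hw set21.
rewrite card_in_imset // => w1 w2; rewrite !inE /adj => h1 _ e12.
have : w1 \in [set v; w2] by rewrite -e12 set22.
rewrite !inE => /orP [/eqP w1v | /eqP //].
by have := card_edge wf h1; rewrite w1v cards2 eqxx.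
Qed.

Lemma handshake p (G : graph p) : wf_graph G -> \sum_v deg G v = nedges G * 2.
Proof.
move=> wf; transitivity (\sum_(v : 'I_p) \sum_(e in G) ((v \in e) : nat)).
  apply: eq_bigr => v _; rewrite deg_edges // -sum1_card big_mkcond [RHS]big_mkcond /=.
  by apply: eq_bigr => e _; rewrite inE; case: (e \in G); case: (v \in e).
rewrite exchange_big /= (eq_bigr (fun _ => 2)) ?sum_nat_const // => e eG.
rewrite -(card_edge wf eG) -sum1_card [RHS]big_mkcond /=.
by apply: eq_bigr => v _; case: (v \in e).
Qed.

Lemma nedges_maxdeg p (G : graph p) : wf_graph G -> nedges G * 2 <= p * maxdeg G.
Proof.
move=> wf; rewrite -handshake // -[p in p * _]card_ord -sum_nat_const.
by apply: leq_sum => v _; apply: leq_bigmax.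
Qed.

Definition complete_graph p : graph p := [set e : {set 'I_p} | #|e| == 2].

Lemma complete_graph_wf p : wf_graph (complete_graph p).
Proof. by apply/forallP => e; apply/implyP; rewrite inE. Qed.

Lemma nedges_complete_graph p : nedges (complete_graph p) = 'C(p, 2).
Proof. by rewrite /nedges card_draws card_ord. Qed.

Lemma nedges_bin2 p (G : graph p) : wf_graph G -> nedges G <= 'C(p, 2).
Proof.
move=> wf; rewrite -nedges_complete_graph; apply: subset_leq_card.
by apply/subsetP => e eG; rewrite inE (card_edge wf eG).
Qed.

Lemma nedges_le_ex p q (L : graph q) (G : graph p) :
  wf_graph G -> ~~ contains G L -> nedges G <= ex p L.
Proof.
move=> wf nc; apply: (leq_bigmax_cond (P := fun G => wf_graph G && ~~ contains G L)).
by rewrite wf nc.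
Qed.

Lemma maxdeg_set0 p : maxdeg (set0 : graph p) = 0.
Proof.
rewrite /maxdeg big1 // => v _; apply/eqP; rewrite cards_eq0; apply/eqP/setP => w.
by rewrite !inE /adj in_set0.
Qed.

(* The maximum defining ex(p; L) is over a nonempty range once L has an edge. *)
Lemma ex_attained p q (L : graph q) : 0 < maxdeg L ->
  exists G : graph p, [/\ wf_graph G, ~~ contains G L & nedges G = ex p L].
Proof.
move=> L0; have [|G] := @eq_bigmax_cond _ [pred G : graph p | wf_graph G && ~~ contains G L]
  (@nedges p).
- apply/card_gt0P; exists set0; rewrite inE; apply/andP; split.
  + by apply/forallP => e; rewrite in_set0.
  + by apply/negP => /contains_maxdeg; rewrite maxdeg_set0 leqNgt L0.
- by rewrite inE => /andP [wf nc] e; exists G.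
Qed.

Definition induced p (G : graph p) (S : {set 'I_p}) : graph #|S| :=
  [set e : {set 'I_#|S|} | ((fun i : 'I_#|S| => enum_val i) @: e) \in G].

Lemma induced_wf p (G : graph p) S : wf_graph G -> wf_graph (induced G S).
Proof.
move=> wf; apply/forallP => e; apply/implyP; rewrite inE => /(card_edge wf).
by rewrite card_imset // => [->|]; last exact: enum_val_inj.
Qed.

Lemma induced_free p q (G : graph p) (L : graph q) S :
  ~~ contains G L -> ~~ contains (induced G S) L.
Proof.
move=> nc; apply/negP => /contains_embedding [f [finj fE]]; apply: (negP nc).
apply/existsP; exists [ffun v => enum_val (f v)]; apply/andP; split.
- by apply/injectiveP => x y; rewrite !ffunE => /enum_val_inj; apply: finj.
- apply/forallP => e; apply/implyP => eL; have := fE e eL; rewrite inE.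
  suff -> : [ffun v => enum_val (f v)] @: e = (fun i : 'I_#|S| => enum_val i) @: (f @: e) by [].
  by rewrite -imset_comp; apply: eq_imset => v; rewrite ffunE.
Qed.

Lemma nedges_induced p (G : graph p) S : nedges (induced G S) = #|[set e in G | e \subset S]|.
Proof.
suff <- : (fun e : {set 'I_#|S|} => (fun i : 'I_#|S| => enum_val i) @: e) @: induced G S
          = [set e in G | e \subset S].
  by rewrite /nedges card_imset //; apply: imset_inj; apply: enum_val_inj.
apply/setP => e; apply/imsetP/idP.
- case=> e'; rewrite inE => he' ->; rewrite inE he' /=.
  by apply/subsetP => x /imsetP [i _ ->]; apply: enum_valP.
- rewrite inE => /andP [eG eS].
  have E : e = (fun i : 'I_#|S| => enum_val i) @: [set i | enum_val i \in e].
    apply/setP => x; apply/idP/imsetP => [xe | [i]]; last by rewrite inE => h ->.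
    have xS : x \in S := subsetP eS x xe.
    by exists (enum_rank_in xS x); rewrite ?inE enum_rankK_in.
  by exists [set i | enum_val i \in e]; rewrite // inE -E.
Qed.

Lemma disconnected_split p (G : graph p) : wf_graph G -> ~~ connected G ->
  exists S : {set 'I_p}, [/\ 0 < #|S|, 0 < #|~: S| &
     nedges G = nedges (induced G S) + nedges (induced G (~: S))].
Proof.
move=> wf /forallPn [x /forallPn [y nxy]].
set S := [set z | connect (adj G) x z]; exists S.
have edge_closed u w : [set u; w] \in G -> (u \in S) = (w \in S).
  move=> h; have h' : [set w; u] \in G by rewrite setUC.
  rewrite !inE; apply/idP/idP => c.
  - exact: connect_trans c (connect1 h).
  - exact: connect_trans c (connect1 h').
have edge_side e : e \in G -> (e \subset S) || (e \subset ~: S).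
  move=> eG; move/eqP/cards2P: (card_edge wf eG) => [u [w [_ E]]]; rewrite E in eG *.
  have := edge_closed u w eG; rewrite !subUset !sub1set !in_setC.
  by case: (u \in S) => <-.
split.
- by apply/card_gt0P; exists x; rewrite inE connect0.
- by apply/card_gt0P; exists y; rewrite !inE.
- rewrite !nedges_induced /nedges -cardsUI.
  have -> : [set e in G | e \subset S] :&: [set e in G | e \subset ~: S] = set0.
    apply/setP => e; rewrite !inE; apply/negP => /andP [/andP [eG s1] /andP [_ s2]].
    have : e \subset S :&: ~: S by rewrite subsetI s1 s2.
    by rewrite setICr subset0 (negbTE (wf_graph_edge_neq0 wf eG)).
  rewrite cards0 addn0; apply: eq_card => e; rewrite !inE.
  by case eG: (e \in G); rewrite //= edge_side.
Qed.

Section DisjointUnion.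

Variables (a b : nat) (A : graph a) (B : graph b).

Definition disjoint_union : graph (a + b) :=
  [set @lshift a b @: e | e : {set 'I_a} in A] :|: [set @rshift a b @: e | e : {set 'I_b} in B].

Lemma imset_lshift_rshift0 (X : {set 'I_a}) (Y : {set 'I_b}) :
  @lshift a b @: X = @rshift a b @: Y -> X = set0.
Proof.
move=> E; apply/setP => i; rewrite in_set0; apply/negP => iX.
have : @lshift a b i \in @rshift a b @: Y by rewrite -E imset_f.
by case/imsetP => j _ /(congr1 val) /=; have := ltn_ord i; lia.
Qed.

Lemma mem_disjoint_union_lshift X : X != set0 -> (@lshift a b @: X \in disjoint_union) = (X \in A).
Proof.
move=> X0; rewrite inE; apply/orP/idP => [[]|XA]; last by left; apply: imset_f.
- by case/imsetP => Y YA /(imset_inj (@lshift_inj a b)) ->.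
- by case/imsetP => Y _ /imset_lshift_rshift0 X0'; rewrite X0' eqxx in X0.
Qed.

Lemma mem_disjoint_union_rshift Y : Y != set0 -> (@rshift a b @: Y \in disjoint_union) = (Y \in B).
Proof.
move=> Y0; rewrite inE; apply/orP/idP => [[]|YB]; last by right; apply: imset_f.
- case/imsetP => X _ E; have X0 := imset_lshift_rshift0 (esym E).
  by move: Y0; rewrite -(imset_eq0 (@rshift a b)) E X0 imset0 eqxx.
- by case/imsetP => X XB /(imset_inj (@rshift_inj a b)) ->.
Qed.

Lemma disjoint_union_wf : wf_graph A -> wf_graph B -> wf_graph disjoint_union.
Proof.
move=> /card_edge wA /card_edge wB; apply/forallP => e; apply/implyP; rewrite inE.
by case/orP => /imsetP [e' he' ->]; rewrite card_imset ?wA ?wB //;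
  [apply: lshift_inj | apply: rshift_inj].
Qed.

Lemma nedges_disjoint_union : wf_graph A -> nedges disjoint_union = nedges A + nedges B.
Proof.
move=> wA; rewrite /nedges /disjoint_union.
set EA := [set _ | e in A]; set EB := [set _ | e in B].
have EAB0 : EA :&: EB = set0.
  apply/setP => e; rewrite !inE.
  apply/negP => /andP [/imsetP [e1 h1 ->] /imsetP [e2 _ /imset_lshift_rshift0 e10]].
  by move: (wf_graph_edge_neq0 wA h1); rewrite e10 eqxx.
move: (cardsUI EA EB); rewrite EAB0 cards0 addn0 => ->.
by rewrite !card_imset //; apply: imset_inj; first [apply: lshift_inj | apply: rshift_inj].
Qed.

End DisjointUnion.

Lemma contains_through c a q (U : graph c) (A : graph a) (L : graph q)
    (s : 'I_a -> 'I_c) (g : 'I_q -> 'I_a) :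
  wf_graph L -> (forall X, X != set0 -> (s @: X \in U) = (X \in A)) ->
  injective (s \o g) -> (forall e, e \in L -> (s \o g) @: e \in U) -> contains A L.
Proof.
move=> wL sU sg_inj sgL; apply/existsP; exists [ffun v => g v]; apply/andP; split.
- by apply/injectiveP => x y; rewrite !ffunE => gxy; apply: sg_inj; rewrite /= gxy.
- apply/forallP => e; apply/implyP => eL.
  have -> : [ffun v => g v] @: e = g @: e by apply: eq_imset => v; rewrite ffunE.
  rewrite -sU; first by rewrite -imset_comp; apply: sgL.
  by rewrite imset_eq0 (wf_graph_edge_neq0 wL eL).
Qed.

(* A connected L embedded in a disjoint union lies on one side, since no edge crosses. *)
Lemma disjoint_union_free a b q (A : graph a) (B : graph b) (L : graph q) :
  wf_graph L -> connected L -> 0 < q -> ~~ contains A L -> ~~ contains B L ->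
  ~~ contains (disjoint_union A B) L.
Proof.
move=> wL cL q0 nA nB; apply/negP => /contains_embedding [f [finj fE]].
have edge_side e : e \in disjoint_union A B -> forall u w, u \in e -> w \in e -> (u < a) = (w < a).
  rewrite inE => /orP [] /imsetP [e' _ ->] u w /imsetP [i _ ->] /imsetP [j _ ->] /=.
  - by rewrite !ltn_ord.
  - by rewrite !ltnNge !leq_addr.
have closed_left : closed (adj L) [pred v | f v < a].
  move=> u w h; rewrite !inE; have := fE _ h; rewrite imsetU1 imset_set1 => h'.
  by apply: (edge_side _ h'); rewrite !inE eqxx ?orbT.
pose v0 : 'I_q := Ordinal q0.
have same_side v : (f v < a) = (f v0 < a).
  by have := closed_connect closed_left (forallP (forallP cL v0) v); rewrite !inE => ->.
case left0 : (f v0 < a).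
- pose g v := insubd (Ordinal left0) (val (f v)) : 'I_a.
  have gE : @lshift a b \o g =1 f.
    by move=> v; apply: val_inj; rewrite /= val_insubd same_side left0.
  apply: (negP nA); apply: (contains_through (g := g) wL (@mem_disjoint_union_lshift a b A B)).
    by move=> x y hxy; apply: finj; rewrite -!gE.
  by move=> e eL; rewrite (eq_imset _ gE); apply: fE.
- have right0 : f v0 - a < b by have := ltn_ord (f v0); lia.
  pose g v := insubd (Ordinal right0) (val (f v) - a) : 'I_b.
  have gE : @rshift a b \o g =1 f.
    move=> v; apply: val_inj; rewrite /= val_insubd; have := ltn_ord (f v).
    by have := same_side v; rewrite left0; case: ifP => /=; lia.
  apply: (negP nB); apply: (contains_through (g := g) wL (@mem_disjoint_union_rshift a b A B)).
    by move=> x y hxy; apply: finj; rewrite -!gE.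
  by move=> e eL; rewrite (eq_imset _ gE); apply: fE.
Qed.

(** * Circulant graphs *)

Lemma sum_nat_between a b lo hi :
  \sum_(a <= j < b) ((lo <= j) && (j < hi) : nat) = minn b hi - maxn a lo.
Proof.
elim: b => [|b IH]; first by rewrite big_geq //; lia.
case: (leqP a b) => h; last by rewrite big_geq //; lia.
by rewrite big_nat_recr //= IH; lia.
Qed.

Lemma sum_nat_lt b hi : \sum_(0 <= j < b) ((j < hi) : nat) = minn b hi.
Proof. by have := sum_nat_between 0 b 0 hi; rewrite /= => ->; lia. Qed.

Lemma sum_nat_eq a b t (c : bool) :
  \sum_(a <= j < b) (((j == t) && c) : nat) = (c && (a <= t < b)).
Proof.
case: c; last by rewrite big1 // => j _; rewrite andbF.
transitivity (\sum_(a <= j < b) ((t <= j) && (j < t.+1) : nat)).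
  by apply: eq_big_nat => j _; lia.
by rewrite sum_nat_between; lia.
Qed.

(* i ~ j when their cyclic distance is at most h or, if o holds, when they are
   antipodal with min i j < N./2; for 2h + 2 <= N the degree of i is then
   2h + [o && i < 2 N./2], so near-regular of any degree 2h + o. *)
Section Circulant.

Variables (N h : nat) (o : bool).

Definition cyclic_dist i j := if i <= j then j - i else j + N - i.
Definition near i j := (i != j) && (minn (cyclic_dist i j) (cyclic_dist j i) <= h).
Definition antipodal i j := [&& o, (i - j) + (j - i) == N./2 & minn i j < N./2].
Definition circ_rel i j := near i j || antipodal i j.

Definition circulant : graph N :=
  [set e : {set 'I_N} | [exists i : 'I_N, exists j : 'I_N, circ_rel i j && (e == [set i; j])]].

Hypothesis hN : 2 * h + 2 <= N.

Lemma circ_relC i j : circ_rel i j = circ_rel j i.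
Proof. by rewrite /circ_rel /near /antipodal eq_sym minnC [minn i j]minnC addnC. Qed.

Lemma circ_rel_irr i : circ_rel i i = false.
Proof. by rewrite /circ_rel /near /antipodal eqxx /=; case: o => //=; lia. Qed.

Lemma circ_relE i j : (circ_rel i j : nat) = near i j + antipodal i j.
Proof.
rewrite /circ_rel /near /antipodal /cyclic_dist; case: o => /=; last by rewrite orbF addn0.
by case: (leqP i j) => hij; case: (leqP j i) => hji; lia.
Qed.

Lemma nearE i j : i < N -> j < N ->
  (near i j : nat) = ((i.+1 <= j) && (j < i + h + 1) : nat) + ((i - h <= j) && (j < i) : nat)
    + ((N + i - h <= j) && (j < N) : nat) + ((0 <= j) && (j < i + h + 1 - N) : nat).
Proof.
move=> iN jN; rewrite /near /cyclic_dist.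
by case: (leqP i j) => hij; case: (leqP j i) => hji; lia.
Qed.

Lemma sum_near i : i < N -> \sum_(0 <= j < N) (near i j : nat) = 2 * h.
Proof.
move=> iN; under eq_big_nat => j /andP [_ jN] do rewrite nearE //.
by rewrite !big_split /= !sum_nat_between sum_nat_lt; lia.
Qed.

Lemma sum_antipodal i : i < N -> \sum_(0 <= j < N) (antipodal i j : nat) = (o && (i < 2 * N./2)).
Proof.
move=> iN; have N2 : 1 <= N./2 by lia.
transitivity (\sum_(0 <= j < N) ((((j == i + N./2) && (o && (i < N./2))) : nat)
   + (((j == i - N./2) && [&& o, N./2 <= i & i - N./2 < N./2]) : nat))).
  by apply: eq_big_nat => j /andP [_ jN]; rewrite /antipodal; case: o => /=; lia.
by rewrite big_split /= !sum_nat_eq; case: o => /=; lia.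
Qed.

Lemma adj_circulant (i j : 'I_N) : adj circulant i j = circ_rel i j.
Proof.
rewrite /adj inE; apply/idP/idP; last first.
  by move=> R; apply/existsP; exists i; apply/existsP; exists j; rewrite R eqxx.
case/existsP => i' /existsP [j' /andP [R /eqP /eq_set2 [] [-> ->]]] //.
by rewrite circ_relC.
Qed.

Lemma circulant_wf : wf_graph circulant.
Proof.
apply/forallP => e; apply/implyP; rewrite inE.
case/existsP => i /existsP [j /andP [R /eqP ->]].
have ij : i != j by apply: contraTneq R => ->; rewrite circ_rel_irr.
by rewrite cards2 ij.
Qed.

Lemma deg_circulant (i : 'I_N) : deg circulant i = 2 * h + (o && (i < 2 * N./2)).
Proof.
transitivity (\sum_(j < N) (circ_rel i j : nat)).
  rewrite /deg -sum1_card big_mkcond /=; apply: eq_bigr => j _.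
  by rewrite inE adj_circulant; case: circ_rel.
rewrite -(big_mkord xpredT (fun j => (circ_rel i j : nat))).
under eq_big_nat => j _ do rewrite circ_relE.
by rewrite big_split /= sum_near // sum_antipodal.
Qed.

Lemma maxdeg_circulant : maxdeg circulant <= 2 * h + o.
Proof. by apply/bigmax_leqP => i _; rewrite deg_circulant; case: o => /=; lia. Qed.

Lemma nedges_circulant : nedges circulant * 2 = 2 * h * N + o * (2 * N./2).
Proof.
rewrite -handshake; last exact: circulant_wf.
under eq_bigr => i _ do rewrite deg_circulant.
rewrite big_split /= sum_nat_const card_ord.
rewrite -(big_mkord xpredT (fun i => (o && (i < 2 * N./2) : nat))).
by case: o => /=; [rewrite sum_nat_lt | rewrite big1 //]; lia.
Qed.

End Circulant.

(** * Arithmetic of the claimed value *)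

Lemma bin2_double x : 'C(x, 2) * 2 + x = x * x.
Proof. by elim: x => [//|x IH]; rewrite binS bin1 mulnDl; lia. Qed.

Lemma leq_bin2D r1 r2 : 'C(r1, 2) + 'C(r2, 2) <= 'C(r1 + r2, 2).
Proof. have := bin2_double r1; have := bin2_double r2; have := bin2_double (r1 + r2); nia. Qed.

Lemma leq_bin2D_carry c r1 r2 s : r1 + r2 = c + s -> r1 <= c -> r2 <= c ->
  'C(r1, 2) + 'C(r2, 2) <= 'C(c, 2) + 'C(s, 2).
Proof.
move=> e h1 h2.
have := bin2_double c; have := bin2_double r1; have := bin2_double r2; have := bin2_double s.
have : r1 * r1 + r2 * r2 <= c * c + s * s by nia.
lia.
Qed.

(* The most edges a graph of maximum degree d on d + 4 + r vertices can have. *)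
Definition regular_edges d r := (d + 4 + r) * d %/ 2.

Lemma regular_edges_bounds d r :
  regular_edges d r * 2 <= (d + 4 + r) * d <= regular_edges d r * 2 + 1.
Proof.
rewrite /regular_edges; have := divn_eq ((d + 4 + r) * d) 2.
have := ltn_pmod ((d + 4 + r) * d) (isT : 0 < 2); lia.
Qed.

Lemma regular_edgesD_bin2 d r1 r2 : r2 <= d + 1 ->
  regular_edges d r1 + 'C(r2, 2) <= regular_edges d (r1 + r2).
Proof.
move=> h2; have := bin2_double r2.
have := regular_edges_bounds d r1; have := regular_edges_bounds d (r1 + r2).
have : r2 * r2 <= r2 * d + r2 by nia.
lia.
Qed.

Lemma regular_edgesD_bin2_carry d r1 r2 s : r2 < d + 4 -> r1 + r2 = d + 4 + s ->
  regular_edges d r1 + 'C(r2, 2) <= 'C(d + 4, 2) + regular_edges d s.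
Proof.
move=> h2 e; have := bin2_double r2; have := bin2_double (d + 4).
have := regular_edges_bounds d r1; have := regular_edges_bounds d s.
have : (d + 4 + r1) * d + r2 * r2 + 1 <= (d + 4) * (d + 4) - (d + 4) + (d + 4 + s) * d + r2
  by nia.
lia.
Qed.

Lemma regular_edges_le_bin2 d r : r <= 1 -> regular_edges d r <= 'C(d + 4, 2).
Proof.
move=> h; have := bin2_double (d + 4); have := regular_edges_bounds d r.
have : (d + 4 + r) * d <= (d + 4) * (d + 4) - d - 4 by nia.
lia.
Qed.

Lemma regular_edgesD d r1 r2 : 5 <= d ->
  regular_edges d r1 + regular_edges d r2 <= 'C(d + 4, 2) + regular_edges d (r1 + r2).
Proof.
move=> d5; have := bin2_double (d + 4); have := regular_edges_bounds d r1.
have := regular_edges_bounds d r2; have := regular_edges_bounds d (r1 + r2).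
nia.
Qed.

Lemma regular_edgesD_carry d r1 r2 s : 5 <= d -> r1 + r2 = d + 4 + s ->
  regular_edges d r1 + regular_edges d r2
  <= 'C(d + 4, 2) + 'C(d + 4, 2) + regular_edges d s.
Proof.
move=> d5 e; have := bin2_double (d + 4); have := regular_edges_bounds d r1.
have := regular_edges_bounds d r2; have := regular_edges_bounds d s.
have : (d + 4 + r1) * d + (d + 4 + r2) * d = (d + 4 + s) * d + 2 * ((d + 4) * d) by nia.
have : 2 * ((d + 4) * d) + 1 <= 2 * ((d + 4) * (d + 4) - (d + 4)) by nia.
lia.
Qed.

(* ex(d + 4 + r; T): the better of K_(d+4) + K_r and a graph of maximum degree d. *)
Definition block d r := maxn ('C(d + 4, 2) + 'C(r, 2)) (regular_edges d r).

Lemma block_cases d r :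
  block d r = 'C(d + 4, 2) + 'C(r, 2) \/ block d r = regular_edges d r.
Proof. by rewrite /block /maxn; case: ifP; auto. Qed.

Lemma leq_block_cliques d r x : x <= 'C(d + 4, 2) + 'C(r, 2) -> x <= block d r.
Proof. by move=> h; apply: leq_trans h (leq_maxl _ _). Qed.

Lemma leq_block_regular d r x : x <= regular_edges d r -> x <= block d r.
Proof. by move=> h; apply: leq_trans h (leq_maxr _ _). Qed.

Lemma blockD_bin2 d r1 r2 : 5 <= d -> r1 + r2 < d + 4 ->
  block d r1 + 'C(r2, 2) <= block d (r1 + r2).
Proof.
move=> d5 lt.
have := bin2_double (d + 4); have := bin2_double r1; have := bin2_double r2.
have := bin2_double (r1 + r2); have := regular_edges_bounds d r1.
have := regular_edges_bounds d (r1 + r2).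
case: (block_cases d r1) => ->.
- by move=> *; apply: leq_block_cliques; lia.
- case: (leqP r2 (d + 1)) => h2 *.
  + apply: leq_block_regular; have : r2 * r2 <= r2 * d + r2 by nia.
    lia.
  + apply: leq_block_cliques.
    have : (d + 4 + r1) * d <= (d + 4) * (d + 4) - d - 4 by nia.
    lia.
Qed.

Lemma blockD_bin2_carry d r1 r2 s : r1 < d + 4 -> r2 < d + 4 -> r1 + r2 = d + 4 + s ->
  block d r1 + 'C(r2, 2) <= 'C(d + 4, 2) + block d s.
Proof.
move=> h1 h2 e; case: (block_cases d r1) => ->.
- have := leq_bin2D_carry e (ltnW h1) (ltnW h2).
  have : 'C(d + 4, 2) + 'C(s, 2) <= block d s by apply: leq_block_cliques.
  lia.
- have := regular_edgesD_bin2_carry h2 e.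
  have : regular_edges d s <= block d s by apply: leq_block_regular.
  lia.
Qed.

Lemma bin2D_regular_edges_le_block d r1 r2 : r1 + r2 < d + 4 ->
  'C(r1, 2) + regular_edges d r2 <= block d (r1 + r2).
Proof.
move=> lt; case: (leqP r1 (d + 1)) => h.
- have := regular_edgesD_bin2 r2 h.
  have : regular_edges d (r2 + r1) <= block d (r1 + r2).
    by rewrite addnC; apply: leq_block_regular.
  lia.
- have h2 : r2 <= 1 by lia.
  have := regular_edges_le_bin2 d h2; have := leq_bin2D r1 r2.
  have : 'C(d + 4, 2) + 'C(r1 + r2, 2) <= block d (r1 + r2) by apply: leq_block_cliques.
  lia.
Qed.

Lemma blockD d r1 r2 : 5 <= d -> r1 + r2 < d + 4 ->
  block d r1 + block d r2 <= 'C(d + 4, 2) + block d (r1 + r2).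
Proof.
move=> d5 lt.
have := bin2D_regular_edges_le_block lt.
have := @bin2D_regular_edges_le_block d r2 r1; rewrite addnC => /(_ lt).
have := leq_bin2D r1 r2; have := regular_edgesD r1 r2 d5.
have : 'C(d + 4, 2) + 'C(r1 + r2, 2) <= block d (r1 + r2) by apply: leq_block_cliques.
have : regular_edges d (r1 + r2) <= block d (r1 + r2) by apply: leq_block_regular.
by case: (block_cases d r1) => ->; case: (block_cases d r2) => ->; lia.
Qed.

Lemma blockD_carry d r1 r2 s : 5 <= d -> r1 < d + 4 -> r2 < d + 4 -> r1 + r2 = d + 4 + s ->
  block d r1 + block d r2 <= 'C(d + 4, 2) + 'C(d + 4, 2) + block d s.
Proof.
move=> d5 h1 h2 e; have e' : r2 + r1 = d + 4 + s by lia.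
have := leq_bin2D_carry e (ltnW h1) (ltnW h2).
have := regular_edgesD_bin2_carry h1 e'; have := regular_edgesD_bin2_carry h2 e.
have := regular_edgesD_carry d5 e.
have : 'C(d + 4, 2) + 'C(s, 2) <= block d s by apply: leq_block_cliques.
have : regular_edges d s <= block d s by apply: leq_block_regular.
by case: (block_cases d r1) => ->; case: (block_cases d r2) => ->; lia.
Qed.

(* The claimed value of ex(k (d + 4) + r; T), for r < d + 4. *)
Definition ex_value d k r := if k is k'.+1 then k' * 'C(d + 4, 2) + block d r else 'C(r, 2).

Lemma ex_valueD d k1 r1 k2 r2 : 5 <= d -> r1 < d + 4 -> r2 < d + 4 ->
  ex_value d k1 r1 + ex_value d k2 r2 <=
  (if r1 + r2 < d + 4 then ex_value d (k1 + k2) (r1 + r2)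
   else ex_value d (k1 + k2).+1 (r1 + r2 - (d + 4))).
Proof.
move=> d5 h1 h2; case: ifP => lt.
- case: k1 => [|k1]; case: k2 => [|k2]; rewrite ?addSn ?addnS ?addn0 ?add0n /=.
  + exact: leq_bin2D.
  + by have := @blockD_bin2 d r2 r1 d5; rewrite addnC => /(_ lt); lia.
  + by have := blockD_bin2 d5 lt; lia.
  + by have := blockD d5 lt; nia.
- have e : r1 + r2 = d + 4 + (r1 + r2 - (d + 4)) by lia.
  have e' : r2 + r1 = d + 4 + (r1 + r2 - (d + 4)) by lia.
  set s := r1 + r2 - (d + 4) in e e' *.
  case: k1 => [|k1]; case: k2 => [|k2]; rewrite ?addSn ?addnS ?addn0 ?add0n /=.
  + have := leq_bin2D_carry e (ltnW h1) (ltnW h2).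
    have : 'C(d + 4, 2) + 'C(s, 2) <= block d s by apply: leq_block_cliques.
    lia.
  + by have := blockD_bin2_carry h2 h1 e'; nia.
  + by have := blockD_bin2_carry h1 h2 e; nia.
  + by have := blockD_carry d5 h1 h2 e; nia.
Qed.

Definition ex_bound d p := ex_value d (p %/ (d + 4)) (p %% (d + 4)).

Lemma ex_boundE d k r : r < d + 4 -> ex_bound d (k * (d + 4) + r) = ex_value d k r.
Proof.
move=> h; have d4 : 0 < d + 4 by rewrite addn4.
by rewrite /ex_bound (divnMDl _ _ d4) modnMDl divn_small // modn_small // addn0.
Qed.

Lemma ex_bound_superadditive d a b : 5 <= d -> ex_bound d a + ex_bound d b <= ex_bound d (a + b).
Proof.
move=> d5; have d4 : 0 < d + 4 by rewrite addn4.
rewrite {1}(divn_eq a (d + 4)) {1}(divn_eq b (d + 4)).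
rewrite {3}(divn_eq a (d + 4)) {3}(divn_eq b (d + 4)).
have h1 := ltn_pmod a d4; have h2 := ltn_pmod b d4.
rewrite !ex_boundE //.
set k1 := a %/ (d + 4); set k2 := b %/ (d + 4); set r1 := a %% (d + 4); set r2 := b %% (d + 4).
have := ex_valueD k1 k2 d5 h1 h2; case: ifP => lt.
- have -> : k1 * (d + 4) + r1 + (k2 * (d + 4) + r2) = (k1 + k2) * (d + 4) + (r1 + r2) by nia.
  by rewrite ex_boundE.
- have -> : k1 * (d + 4) + r1 + (k2 * (d + 4) + r2)
            = (k1 + k2).+1 * (d + 4) + (r1 + r2 - (d + 4)) by nia.
  by rewrite ex_boundE //; lia.
Qed.

Lemma sparse_le_ex_bound d q e : d + 4 <= q -> e * 2 <= q * d -> e <= ex_bound d q.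
Proof.
move=> hq he; have d4 : 0 < d + 4 by rewrite addn4.
move: hq he; rewrite (divn_eq q (d + 4)) ex_boundE ?ltn_pmod //.
set k := q %/ (d + 4); set r := q %% (d + 4).
have hr : r < d + 4 by apply: ltn_pmod.
case: k => [|k] /= hq he; first by lia.
have := bin2_double (d + 4); have := regular_edges_bounds d r.
have : regular_edges d r <= block d r by apply: leq_block_regular.
have : k.+1 * (d + 4) + r = k * (d + 4) + (d + 4 + r) by nia.
have : (k * (d + 4)) * d <= (k * (d + 4)) * (d + 3) by nia.
nia.
Qed.

Lemma bin2_le_ex_bound d q : q <= d + 4 -> 'C(q, 2) <= ex_bound d q.
Proof.
move=> h; case: (ltnP q (d + 4)) => h'.
- by rewrite -[q]add0n -[0]/(0 * (d + 4)) ex_boundE.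
- have -> : q = 1 * (d + 4) + 0 by lia.
  rewrite ex_boundE; last by rewrite addn4.
  by rewrite /= mul1n !addn0 add0n; apply: leq_block_cliques; apply: leq_addr.
Qed.

(** * Bounds on ex *)

Section Extremal.

Variables (q : nat) (L : graph q).

Lemma ex_superadditive a b : wf_graph L -> connected L -> 0 < q -> 0 < maxdeg L ->
  ex a L + ex b L <= ex (a + b) L.
Proof.
move=> wL cL q0 L0.
have [A [wA nA <-]] := @ex_attained a q L L0.
have [B [wB nB <-]] := @ex_attained b q L L0.
rewrite -nedges_disjoint_union //; apply: nedges_le_ex; first exact: disjoint_union_wf.
exact: disjoint_union_free.
Qed.

Lemma bin2_le_ex c : c < q -> 'C(c, 2) <= ex c L.
Proof.
move=> cq; rewrite -nedges_complete_graph; apply: nedges_le_ex; first exact: complete_graph_wf.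
by apply/negP => /contains_card; rewrite leqNgt cq.
Qed.

Lemma regular_edges_le_ex d r : d < maxdeg L -> regular_edges d r <= ex (d + 4 + r) L.
Proof.
move=> dL; set N := d + 4 + r; set h := d./2; set o := odd d.
have hN : 2 * h + 2 <= N by rewrite /N /h; lia.
have d_eq : 2 * h + o = d by rewrite /h /o -[d in _ = d](odd_double_half d); lia.
apply: (@leq_trans (nedges (circulant N h o))); last first.
  apply: nedges_le_ex; first exact: circulant_wf.
  by apply/negP => /contains_maxdeg; have := maxdeg_circulant o hN; lia.
have := nedges_circulant o hN; have := regular_edges_bounds d r.
have := odd_double_half N; rewrite -/N.
have : N * d = N * o + 2 * h * N by rewrite -[in LHS]d_eq mulnDr; lia.
have : N * o <= odd N + 2 * N./2 * o.
  by rewrite -{1}(odd_double_half N); case: (o); case: (odd N); lia.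
nia.
Qed.

Lemma ex_le_ex_bound d : 5 <= d -> 0 < maxdeg L ->
  (forall m (H : graph m), d + 4 < m -> in_Ex L H -> connected H -> maxdeg H <= d) ->
  forall p, ex p L <= ex_bound d p.
Proof.
move=> d5 L0 sparse p; elim/ltn_ind: p => p IH.
have [G [wG nG eG]] := @ex_attained p q L L0; rewrite -eG.
have [small | big] := leqP p (d + 4).
  exact: leq_trans (nedges_bin2 wG) (bin2_le_ex_bound small).
have [cG | ncG] := boolP (connected G).
  have GE : in_Ex L G by rewrite /in_Ex wG nG eG eqxx.
  apply: sparse_le_ex_bound; first exact: ltnW.
  by apply: leq_trans (nedges_maxdeg wG) _; rewrite leq_mul2l (sparse _ _ big GE cG) orbT.
have [S [S0 SC0 ->]] := disconnected_split wG ncG.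
have SSC : #|S| + #|~: S| = p by rewrite cardsC card_ord.
apply: leq_trans (leq_add (nedges_le_ex (induced_wf S wG) (induced_free S nG))
                          (nedges_le_ex (induced_wf (~: S) wG) (induced_free (~: S) nG))) _.
apply: leq_trans (leq_add (IH _ _) (IH _ _)) _; [lia | lia |].
by rewrite -[X in _ <= ex_bound _ X]SSC; apply: ex_bound_superadditive.
Qed.

Lemma ex_value_le_ex d k r : wf_graph L -> connected L -> d + 4 < q -> d < maxdeg L ->
  r < d + 4 -> ex_value d k r <= ex (k * (d + 4) + r) L.
Proof.
move=> wL cL dq dL rd.
have q0 : 0 < q by lia.
have L0 : 0 < maxdeg L by lia.
have clique : 'C(d + 4, 2) <= ex (d + 4) L by apply: bin2_le_ex.
case: k => [|k] /=; first by rewrite add0n; apply: bin2_le_ex; lia.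
elim: k => [|k IHk].
  rewrite mul0n add0n mul1n /block geq_max regular_edges_le_ex // andbT.
  apply: leq_trans (ex_superadditive _ _ wL cL q0 L0).
  by apply: leq_add; last apply: bin2_le_ex; lia.
rewrite mulSn -addnA [in X in _ <= X]mulSn -addnA.
apply: leq_trans (ex_superadditive _ _ wL cL q0 L0).
exact: leq_add.
Qed.

End Extremal.

Local Open Scope ring_scope.

Lemma ex_value_closed_form n d k r p : n = (d + 5)%N -> p = (k * (d + 4) + r)%N ->
  (0 < k)%N -> (r < d + 4)%N ->
  (ex_value d k r)%:Z =
    ((((n%:Z - 2) * p%:Z - r%:Z * (n%:Z - 1 - r%:Z)) %/ 2)%Z
     + Num.max 0 (((r%:Z * (n%:Z - 4 - r%:Z) - 3 * (n%:Z - 1)) %/ 2)%Z)).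
Proof.
move=> -> ->; case: k => [//|k] _ rd /=.
have := bin2_double (d + 4); have := bin2_double r.
set C := 'C(d + 4, 2); set Cr := 'C(r, 2) => Cr2 C2.
have -> : ((d + 5)%:Z - 2) * (k.+1 * (d + 4) + r)%N%:Z - r%:Z * ((d + 5)%:Z - 1 - r%:Z)
          = (k.+1 * C + Cr)%N%:Z * 2 by lia.
have -> : r%:Z * ((d + 5)%:Z - 4 - r%:Z) - 3 * ((d + 5)%:Z - 1)
          = - (C + Cr)%N%:Z * 2 + ((d + 4 + r) * d)%N%:Z by lia.
rewrite mulzK // divzMDl // divz_nat /block -/(regular_edges d r).
lia.
Qed.

Theorem lemma2p10 (n : nat) (T : graph n) (p k r : nat) :
  (10 <= n)%N ->
  is_tree T ->
  maxdeg T = (n - 4)%N ->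
  (forall (m : nat) (H : graph m),
      (n <= m)%N -> in_Ex T H -> connected H -> (maxdeg H <= n - 5)%N) ->
  p = (k * (n - 1) + r)%N ->
  (r <= n - 2)%N ->
  (n - 1 <= p)%N ->
  (ex p T)%:Z =
    ((((n%:Z - 2) * p%:Z - r%:Z * (n%:Z - 1 - r%:Z)) %/ 2)%Z
     + Num.max 0 (((r%:Z * (n%:Z - 4 - r%:Z) - 3 * (n%:Z - 1)) %/ 2)%Z)).
Proof.
move=> n10 [wT [cT _]] maxT extremal_sparse p_eq r_le p_ge.
set d := (n - 5)%N.
have n_eq : n = (d + 5)%N by rewrite /d; lia.
have p_eq' : p = (k * (d + 4) + r)%N by rewrite p_eq /d; congr (_ * _ + _)%N; lia.
have r_lt : (r < d + 4)%N by rewrite /d; lia.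
have k_gt0 : (0 < k)%N by case: (posnP k) p_eq' => // ->; lia.
suff -> : ex p T = ex_value d k r by apply: ex_value_closed_form.
apply/eqP; rewrite eqn_leq; apply/andP; split.
- rewrite p_eq' -ex_boundE //; apply: ex_le_ex_bound; [lia | rewrite maxT; lia |].
  by move=> m H m_gt; apply: extremal_sparse; lia.
- by rewrite p_eq'; apply: ex_value_le_ex => //; lia.
Qed.
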